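(* Let $S$ be a finite set of at least three points in the plane and $v>1$. Let $C$ be a smallest enclosing cross for $S$ and let the median highways $h_1,h_2$ be the middle lines of the two strips of $C$. Then the travel-time diameter $\delta_{\mathrm{med}}$ of $S$ for the speed-$v$ highway cross $h_1\cup h_2$ satisfies $\delta_{\mathrm{med}}\le(2+1/v)\,\delta_{\mathrm{opt}}$, where $\delta_{\mathrm{opt}}$ is the travel-time diameter of $S$ for an optimal axis-aligned speed-$v$ highway cross. Moreover, for every $v\ge\sqrt3$ there are point sets $S$ for which $\delta_{\mathrm{med}}\ge(2-1/(v+2))\,\delta_{\mathrm{opt}}$.
   Context: The underlying metric is the $L_1$-metric. An axis-aligned highway cross is the union $H$ of a horizontal and a vertical line; one travels with speed $1$ off $H$ ($L_1$-lengths) and with speed $v$ along either line of $H$. The travel time $t_H(p,q)$ is the minimum time of a path from $p$ to $q$, and the travel-time diameter of $S$ is $\max_{p,q\in S}t_H(p,q)$; an optimal axis-aligned highway cross minimizes it. An enclosing cross of $S$ is the union of a horizontal strip and a vertical strip (closed regions between two parallel lines) of equal width containing $S$; a smallest enclosing cross has minimum width. The middle line of a strip is the line halfway between its boundary lines. *)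

From HB Require Import structures.
From mathcomp Require Import all_boot all_order all_algebra.
From mathcomp Require Import boolp classical_sets reals.
Set Implicit Arguments. Unset Strict Implicit. Unset Printing Implicit Defensive.
Import Order.TTheory GRing.Theory Num.Theory.
Local Open Scope ring_scope.
Local Open Scope classical_set_scope.

Section Highway.
Variable R : realType.
Implicit Types (p q x y : R * R) (a b v w : R).

Definition l1 x y : R := `|x.1 - y.1| + `|x.2 - y.2|.

(* An axis-aligned highway cross is encoded by H = (a, b): the union of the
   vertical line {x = a} and the horizontal line {y = b}. *)
Definition on_H (H : R * R) x y : bool :=
  ((x.1 == H.1) && (y.1 == H.1)) || ((x.2 == H.2) && (y.2 == H.2)).

Definition seg_time (H : R * R) v x y : R :=
  if on_H H x y then l1 x y / v else l1 x y.

Fixpoint path_time (H : R * R) v q x (s : seq (R * R)) : R :=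
  match s with
  | [::] => seg_time H v x q
  | y :: s' => seg_time H v x y + path_time H v q y s'
  end.

Definition travel_time (H : R * R) v p q : R :=
  inf [set t | exists s : seq (R * R), t = path_time H v q p s].

Definition tt_diam (H : R * R) v (S : seq (R * R)) : R :=
  \big[Num.max/0]_(p <- S) \big[Num.max/0]_(q <- S) travel_time H v p q.

Definition delta_opt v (S : seq (R * R)) : R :=
  inf (range (fun H : R * R => tt_diam H v S)).

(* Enclosing cross (ch, cv, w): horizontal strip {ch <= y <= ch + w} and
   vertical strip {cv <= x <= cv + w}, both of width w, covering S. *)
Definition enclosing_cross (S : seq (R * R)) (ch cv w : R) : Prop :=
  0 <= w /\
  forall p, p \in S -> (ch <= p.2 <= ch + w) || (cv <= p.1 <= cv + w).

Definition smallest_enclosing_cross (S : seq (R * R)) (ch cv w : R) : Prop :=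
  enclosing_cross S ch cv w /\
  forall ch' cv' w', enclosing_cross S ch' cv' w' -> w <= w'.

Definition median_cross (ch cv w : R) : R * R := (cv + w / 2, ch + w / 2).

End Highway.

(* Write D for the travel-time diameter of S for an arbitrary axis-aligned cross H.
   A point nearer to the vertical line of H than to its horizontal line can only
   reach another such point in time at least their horizontal distance, so these
   points lie in a vertical strip of width D, and the others in a horizontal strip
   of width D: the smallest enclosing cross has width w <= D.  Every point of S lies
   within w/2 of a median highway, so walking to it, riding along the median cross
   and walking off takes at most w + (|pq|_1 + w)/v, while |pq|_1/v <= D.

   In the example showing near-tightness, travel times through the median cross
   are bounded below by the best of finitely many canonical routes: the time of
   the best such route to a fixed target drops along any segment by at most the
   time needed to traverse that segment. *)

From HB Require Import structures.
From mathcomp Require Import all_boot all_order all_algebra.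
From mathcomp Require Import boolp classical_sets reals.
From mathcomp Require Import lra ring.
Import Order.TTheory GRing.Theory Num.Theory.
Set Implicit Arguments.
Unset Strict Implicit.
Unset Printing Implicit Defensive.
Local Open Scope ring_scope.

Ltac elim_norms solver := repeat match goal with |- context [ `|?t| ] =>
  let h := fresh "h" in
  first [ have h : 0 <= t by solver | have h : t < 0 by solver ];
  first [ rewrite (ger0_norm h) | rewrite (ltr0_norm h) ]; clear h end.

Ltac by_route route := apply: le_trans (route _ _ _) _.

Section Highway.
Variable R : realType.
Implicit Types (H p q x y : R * R) (s S : seq (R * R)) (v Y eps : R).

Definition swap x : R * R := (x.2, x.1).

Lemma swapK : involutive swap. Proof. by case. Qed.

Lemma l1_ge0 x y : 0 <= l1 x y.
Proof. by rewrite /l1 addr_ge0. Qed.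

Lemma l1_triangle x y z : l1 x z <= l1 x y + l1 y z.
Proof. by rewrite /l1 addrACA lerD // ler_distD. Qed.

Lemma l1_swap x y : l1 (swap x) (swap y) = l1 x y.
Proof. by rewrite /l1 addrC. Qed.

Lemma on_H_swap H x y : on_H (swap H) (swap x) (swap y) = on_H H x y.
Proof. by rewrite /on_H orbC. Qed.

Lemma seg_time_swap H v x y : seg_time (swap H) v (swap x) (swap y) = seg_time H v x y.
Proof. by rewrite /seg_time on_H_swap l1_swap. Qed.

Lemma path_time_swap H v q x s :
  path_time (swap H) v (swap q) (swap x) (map swap s) = path_time H v q x s.
Proof. by elim: s x => [|y s IH] x /=; rewrite seg_time_swap ?IH. Qed.

Lemma travel_time_swap H v p q :
  travel_time (swap H) v (swap p) (swap q) = travel_time H v p q.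
Proof.
rewrite /travel_time; congr inf; apply/seteqP; split=> _ [s ->].
- by exists (map swap s); rewrite -[RHS]path_time_swap (mapK swapK).
- by exists (map swap s); rewrite path_time_swap.
Qed.

Lemma path_time_ge_potential H v q (f : R * R -> R) :
  (forall x y, f x <= seg_time H v x y + f y) -> f q <= 0 ->
  forall s x, f x <= path_time H v q x s.
Proof.
move=> f_step fq0; elim=> [|y s IH] x /=; first by have := f_step x q; lra.
by rewrite (le_trans (f_step x y)) // lerD2l.
Qed.

Lemma travel_time_ge_potential H v p q (f : R * R -> R) :
  (forall x y, f x <= seg_time H v x y + f y) -> f q <= 0 ->
  f p <= travel_time H v p q.
Proof.
move=> f_step fq0; apply: lb_le_inf; first by exists (path_time H v q p [::]), [::].
by move=> _ [s ->]; exact: path_time_ge_potential.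
Qed.

Lemma travel_time_le_diam H v S p q :
  p \in S -> q \in S -> travel_time H v p q <= tt_diam H v S.
Proof.
move=> pS qS; apply: le_trans (le_bigmax_seq 0 _ _ _ pS isT).
exact: (le_bigmax_seq 0 _ xpredT (travel_time H v p) qS isT).
Qed.

Lemma tt_diam_le H v S D : 0 <= D ->
  {in S &, forall p q, travel_time H v p q <= D} -> tt_diam H v S <= D.
Proof.
move=> D0 hD; rewrite /tt_diam big_seq; apply: bigmax_le => // p pS.
by rewrite big_seq; apply: bigmax_le => // q qS; exact: hD.
Qed.

Lemma tt_diam_ge0 H v S : 0 <= tt_diam H v S.
Proof. by apply: (big_rec (fun d => 0 <= d)) => // p d _ d0; rewrite le_max d0 orbT. Qed.

Lemma delta_opt_le_diam H v S : delta_opt v S <= tt_diam H v S.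
Proof.
apply: ge_inf; last by exists H.
by exists 0 => _ [H' _ <-]; exact: tt_diam_ge0.
Qed.

Lemma le_delta_opt v S c : (forall H, c <= tt_diam H v S) -> c <= delta_opt v S.
Proof.
move=> hc; apply: lb_le_inf; first by exists (tt_diam (0, 0) v S), (0, 0).
by move=> _ [H _ <-].
Qed.

Lemma strip_cover S (P : pred (R * R)) (g : R * R -> R) D : 0 <= D ->
  {in S &, forall p q, P p -> P q -> g p - g q <= D} ->
  exists c, {in S, forall p, P p -> c <= g p <= c + D}.
Proof.
move=> D0 hD; have [/hasP [p0 p0S Pp0] | /hasPn noP] := boolP (has P S); last first.
  by exists 0 => p /noP /negP.
exists (\big[Num.max/g p0]_(p <- S | P p) g p - D) => p pS Pp.
rewrite lerBlDr subrK (le_bigmax_seq (g p0) _ _ _ pS Pp) andbT big_seq_cond.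
apply: bigmax_le => [|q /andP[qS Pq]]; rewrite -lerBlDl; exact: hD.
Qed.

Lemma min_le_add_min (a b a' b' c : R) :
  a <= c + a' -> b <= c + b' -> Num.min a b <= c + Num.min a' b'.
Proof. by rewrite addr_minr; exact: le_min2. Qed.

Section Speed.
Variable v : R.
Hypothesis v_gt1 : 1 < v.
Implicit Types (a b t : R).

Let v_gt0 : 0 < v. Proof. exact: lt_trans ltr01 v_gt1. Qed.

Lemma divv_ge0 a : 0 <= a -> 0 <= a / v.
Proof. by move=> a0; rewrite divr_ge0 // ltW. Qed.

Lemma divv_le a : 0 <= a -> a / v <= a.
Proof. by move=> a0; rewrite ler_pdivrMr // ler_peMr // ltW. Qed.

Lemma ler_divv a b : a <= b -> a / v <= b / v.
Proof. by move=> ab; rewrite ler_pM2r // invr_gt0. Qed.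

Lemma seg_time_le_l1 H x y : seg_time H v x y <= l1 x y.
Proof. by rewrite /seg_time; case: ifP => // _; rewrite divv_le // l1_ge0. Qed.

Lemma seg_time_ge_l1 H x y : l1 x y / v <= seg_time H v x y.
Proof. by rewrite /seg_time; case: ifP => // _; rewrite divv_le // l1_ge0. Qed.

Lemma seg_time_on H x y : on_H H x y -> seg_time H v x y = l1 x y / v.
Proof. by rewrite /seg_time => ->. Qed.

Lemma travel_time_le_path H p q s : travel_time H v p q <= path_time H v q p s.
Proof.
apply: ge_inf; last by exists s.
exists 0 => _ [s' ->]; apply: (@path_time_ge_potential H v q (fun=> 0)) => // x y.
by rewrite addr0 (le_trans _ (seg_time_ge_l1 H x y)) // divv_ge0 // l1_ge0.
Qed.

Lemma travel_time_ge_l1 H p q : l1 p q / v <= travel_time H v p q.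
Proof.
apply: (@travel_time_ge_potential H v p q (fun x => l1 x q / v)); last first.
  by rewrite /l1 !subrr normr0 addr0 mul0r.
move=> x y; apply: le_trans (lerD (seg_time_ge_l1 H x y) (lexx _)).
by rewrite -mulrDl ler_divv // l1_triangle.
Qed.

Lemma travel_time_le_l1 H p q : travel_time H v p q <= l1 p q.
Proof. exact: le_trans (travel_time_le_path H p q [::]) (seg_time_le_l1 H p q). Qed.

Lemma travel_time_le_vertical H p q :
  travel_time H v p q <= `|p.1 - H.1| + `|p.2 - q.2| / v + `|q.1 - H.1|.
Proof.
apply: le_trans (travel_time_le_path H p q [:: (H.1, p.2); (H.1, q.2)]) _ => /=.
rewrite (@seg_time_on H (H.1, p.2)); last by rewrite /on_H !eqxx.
have := seg_time_le_l1 H p (H.1, p.2); have := seg_time_le_l1 H (H.1, q.2) q.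
by rewrite /l1 /= !subrr normr0 (distrC H.1); lra.
Qed.

Lemma travel_time_le_vertical_horizontal H p q :
  travel_time H v p q <=
  `|p.1 - H.1| + (`|p.2 - H.2| + `|q.1 - H.1|) / v + `|q.2 - H.2|.
Proof.
apply: le_trans
  (travel_time_le_path H p q [:: (H.1, p.2); (H.1, H.2); (q.1, H.2)]) _ => /=.
rewrite (@seg_time_on H (H.1, p.2)); last by rewrite /on_H !eqxx.
rewrite (@seg_time_on H (H.1, H.2)); last by rewrite /on_H !eqxx orbT.
have := seg_time_le_l1 H p (H.1, p.2); have := seg_time_le_l1 H (q.1, H.2) q.
by rewrite /l1 /= !subrr !normr0 (distrC H.1) (distrC H.2) mulrDl; lra.
Qed.

Lemma travel_time_le_horizontal H p q :
  travel_time H v p q <= `|p.2 - H.2| + `|p.1 - q.1| / v + `|q.2 - H.2|.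
Proof. by rewrite -travel_time_swap travel_time_le_vertical. Qed.

Lemma travel_time_le_horizontal_vertical H p q :
  travel_time H v p q <=
  `|p.2 - H.2| + (`|p.1 - H.1| + `|q.2 - H.2|) / v + `|q.1 - H.1|.
Proof. by rewrite -travel_time_swap travel_time_le_vertical_horizontal. Qed.

(* Time from the point (H.1, t) of the vertical highway to q: ride to the level
   of q and walk, or ride to the crossing, ride the horizontal highway to q.1
   and walk. *)
Definition time_from_vertical H q t : R :=
  Num.min (`|t - q.2| / v + `|q.1 - H.1|)
          ((`|t - H.2| + `|q.1 - H.1|) / v + `|q.2 - H.2|).

Definition time_via_vertical H x q : R :=
  `|x.1 - H.1| + time_from_vertical H q x.2.

Definition route_time H x q : R :=
  Num.min (l1 x q)
    (Num.min (time_via_vertical H x q) (time_via_vertical (swap H) (swap x) (swap q))).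

Lemma time_from_vertical_lipschitz H q t t' :
  time_from_vertical H q t <= `|t - t'| / v + time_from_vertical H q t'.
Proof.
apply: min_le_add_min; rewrite addrA -mulrDl lerD2r ler_divv //.
  exact: ler_distD.
by rewrite addrA lerD2r ler_distD.
Qed.

Lemma time_from_vertical_le_l1 H q t :
  time_from_vertical H q t <= `|t - q.2| + `|q.1 - H.1|.
Proof. by rewrite ge_min lerD2r divv_le. Qed.

Lemma time_from_vertical_le_center H q t :
  time_from_vertical H q t <= `|t - H.2| / v + time_from_vertical (swap H) (swap q) H.1.
Proof.
rewrite /time_from_vertical /= subrr normr0 add0r (distrC H.1) addr_minr le_min.
rewrite !ge_min !addrA -!mulrDl lexx orbT /=; apply/orP; left.
by rewrite lerD2r ler_divv // (distrC q.2) ler_distD.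
Qed.

Lemma time_from_vertical_ge H q t :
  Num.min `|q.1 - H.1| `|q.2 - H.2| <= time_from_vertical H q t.
Proof. by apply: le_min2; rewrite ler_wpDl // divv_ge0 // ?addr_ge0. Qed.

Lemma time_via_vertical_lipschitz H x y q :
  time_via_vertical H x q <= l1 x y + time_via_vertical H y q.
Proof.
have := ler_distD y.1 x.1 H.1; have := time_from_vertical_lipschitz H q x.2 y.2.
have := divv_le (normr_ge0 (x.2 - y.2)).
rewrite /time_via_vertical /l1; lra.
Qed.

Lemma route_time_swap H x q : route_time (swap H) (swap x) (swap q) = route_time H x q.
Proof. by rewrite /route_time l1_swap !swapK [X in Num.min _ X]minC. Qed.

Lemma route_time_vertical H x q :
  x.1 = H.1 -> route_time H x q = time_from_vertical H q x.2.
Proof.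
rewrite /route_time /time_via_vertical => xH; rewrite xH subrr normr0 add0r.
set T := time_from_vertical H q x.2.
apply/le_anti; rewrite ge_min ge_min lexx orbT /= le_min le_min.
apply/and3P; split=> //.
- by rewrite /l1 xH distrC addrC time_from_vertical_le_l1.
- apply: le_trans (time_from_vertical_le_center _ _ _) _ => /=.
  by rewrite xH lerD2r divv_le.
Qed.

Lemma route_time_l1_lipschitz H x y q :
  route_time H x q <= l1 x y + route_time H y q.
Proof.
apply: min_le_add_min; first exact: l1_triangle.
apply: min_le_add_min; first exact: time_via_vertical_lipschitz.
by rewrite -l1_swap; exact: time_via_vertical_lipschitz.
Qed.

Lemma route_time_potential H x y q :
  route_time H x q <= seg_time H v x y + route_time H y q.
Proof.
have vertical_step H' x' y' q' : x'.1 = H'.1 -> y'.1 = H'.1 ->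
    route_time H' x' q' <= `|x'.2 - y'.2| / v + route_time H' y' q'.
  by move=> xH yH; rewrite !route_time_vertical // time_from_vertical_lipschitz.
rewrite /seg_time; case: ifP => [|_]; last exact: route_time_l1_lipschitz.
rewrite /on_H => /orP[/andP[/eqP xH /eqP yH] | /andP[/eqP xH /eqP yH]].
  by rewrite /l1 xH yH subrr normr0 add0r vertical_step.
rewrite -route_time_swap -[route_time H y q]route_time_swap /l1 xH yH subrr normr0 addr0.
exact: (vertical_step (swap H) (swap x) (swap y)).
Qed.

Lemma travel_time_ge_route_time H p q : route_time H p q <= travel_time H v p q.
Proof.
apply: (@travel_time_ge_potential H v p q (route_time H ^~ q)) => [x y|].
  exact: route_time_potential.
by rewrite ge_min /l1 !subrr normr0 addr0 lexx.
Qed.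

Lemma travel_time_ge_xdist H p q :
  `|p.1 - H.1| <= `|p.2 - H.2| -> `|q.1 - H.1| <= `|q.2 - H.2| ->
  `|p.1 - q.1| <= travel_time H v p q.
Proof.
move=> pH qH; apply: le_trans (travel_time_ge_route_time H p q).
have := time_from_vertical_ge H q p.2.
have := time_from_vertical_ge (swap H) (swap q) p.1.
rewrite /= (min_l qH) (min_r qH) => via_h via_v.
have := ler_distD H.1 p.1 q.1; rewrite (distrC H.1 q.1) => tri.
rewrite !le_min /time_via_vertical /=; apply/and3P; split; try lra.
by rewrite /l1 ler_wpDr.
Qed.

Lemma travel_time_ge_ydist H p q :
  `|p.2 - H.2| <= `|p.1 - H.1| -> `|q.2 - H.2| <= `|q.1 - H.1| ->
  `|p.2 - q.2| <= travel_time H v p q.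
Proof.
by rewrite -travel_time_swap; exact: (@travel_time_ge_xdist (swap H) (swap p) (swap q)).
Qed.

Lemma enclosing_cross_diam H S : exists ch cv, enclosing_cross S ch cv (tt_diam H v S).
Proof.
pose P := [pred x : R * R | `|x.1 - H.1| <= `|x.2 - H.2|].
have D0 := tt_diam_ge0 H v S.
have [cv vstrip] : exists cv, {in S, forall p, P p -> cv <= p.1 <= cv + tt_diam H v S}.
  apply: strip_cover => // p q pS qS Pp Pq.
  apply: le_trans (ler_norm _) (le_trans (travel_time_ge_xdist Pp Pq) _).
  exact: travel_time_le_diam.
have [ch hstrip] : exists ch, {in S, forall p, ~~ P p -> ch <= p.2 <= ch + tt_diam H v S}.
  apply: strip_cover => // p q pS qS; rewrite /= -!ltNge => /ltW Pp /ltW Pq.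
  apply: le_trans (ler_norm _) (le_trans (travel_time_ge_ydist Pp Pq) _).
  exact: travel_time_le_diam.
exists ch, cv; split=> // p pS.
by case: (boolP (P p)) => Pp; [rewrite vstrip ?orbT | rewrite hstrip].
Qed.

Lemma smallest_cross_width_le_diam H S ch cv w :
  smallest_enclosing_cross S ch cv w -> w <= tt_diam H v S.
Proof. by move=> [_ minw]; have [ch' [cv' /minw]] := enclosing_cross_diam H S. Qed.

Lemma enclosing_cross_near_median S ch cv w x :
  enclosing_cross S ch cv w -> x \in S ->
  `|x.2 - (median_cross ch cv w).2| <= w / 2 \/ `|x.1 - (median_cross ch cv w).1| <= w / 2.
Proof.
rewrite /median_cross /= => -[_ cover] /cover /orP[] /andP[lo hi]; [left | right];
  by rewrite ler_norml; apply/andP; split; lra.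
Qed.

Lemma median_travel_time_le S ch cv w p q :
  enclosing_cross S ch cv w -> p \in S -> q \in S ->
  travel_time (median_cross ch cv w) v p q <= w + (l1 p q + w) / v.
Proof.
move=> cross pS qS; set M := median_cross ch cv w.
have w0 : 0 <= w by case: cross.
have := divv_ge0 w0; have := divv_ge0 (normr_ge0 (p.1 - q.1)).
have := divv_ge0 (normr_ge0 (p.2 - q.2)).
have := ler_distD q.1 p.1 M.1; have := ler_distD p.1 q.1 M.1.
have := ler_distD q.2 p.2 M.2; have := ler_distD p.2 q.2 M.2.
rewrite (distrC q.1 p.1) (distrC q.2 p.2) !mulrDl /l1 => t1 t2 t3 t4 b0 a0 w0'.
case: (enclosing_cross_near_median cross pS) => hp;
case: (enclosing_cross_near_median cross qS) => hq; rewrite -/M in hp hq.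
- by apply: le_trans (travel_time_le_horizontal M p q) _; lra.
- apply: le_trans (travel_time_le_horizontal_vertical M p q) _.
  have : `|p.1 - M.1| + `|q.2 - M.2| <= `|p.1 - q.1| + `|p.2 - q.2| + w by lra.
  by move/ler_divv; rewrite !mulrDl; lra.
- apply: le_trans (travel_time_le_vertical_horizontal M p q) _.
  have : `|p.2 - M.2| + `|q.1 - M.1| <= `|p.1 - q.1| + `|p.2 - q.2| + w by lra.
  by move/ler_divv; rewrite !mulrDl; lra.
- by apply: le_trans (travel_time_le_vertical M p q) _; lra.
Qed.

Lemma median_diam_le S ch cv w H :
  smallest_enclosing_cross S ch cv w ->
  tt_diam (median_cross ch cv w) v S <= (2 + 1 / v) * tt_diam H v S.
Proof.
move=> smallest; set D := tt_diam H v S.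
have D0 : 0 <= D := tt_diam_ge0 H v S.
have wD : w <= D := smallest_cross_width_le_diam H smallest.
have wDv := ler_divv wD; have Dv0 := divv_ge0 D0.
rewrite mulrDl mul1r [v^-1 * D]mulrC.
apply: tt_diam_le => [|p q pS qS]; first lra.
have := median_travel_time_le smallest.1 pS qS; rewrite mulrDl.
have := le_trans (travel_time_ge_l1 H p q) (travel_time_le_diam H v pS qS).
rewrite -/D; lra.
Qed.

Lemma median_diam_le_delta_opt S ch cv w :
  smallest_enclosing_cross S ch cv w ->
  tt_diam (median_cross ch cv w) v S <= (2 + 1 / v) * delta_opt v S.
Proof.
move=> smallest; have c0 : 0 < 2 + 1 / v by rewrite ltr_wpDr // divv_ge0.
rewrite -ler_pdivrMl //; apply: le_delta_opt => H.
by rewrite ler_pdivrMl //; exact: median_diam_le.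
Qed.

End Speed.

Definition example_set Y eps : seq (R * R) :=
  [:: (1/2, -Y); (Y, -(1/2)); (-(1/2), -1); (1, 1/2); (-eps, eps)].

Lemma example_set_uniq Y eps : 2 < Y -> 0 < eps < 1/2 -> uniq (example_set Y eps).
Proof.
move=> Y2 /andP[eps0 eps1]; apply: (@map_uniq _ _ fst); rewrite /= !inE !negb_or.
by repeat (apply/andP; split=> //); apply/eqP; lra.
Qed.

Lemma example_set_cross Y eps : 2 < Y -> 0 < eps < 1/2 ->
  enclosing_cross (example_set Y eps) (-(1/2)) (-(1/2)) 1.
Proof.
move=> Y2 /andP[eps0 eps1]; split=> [|x]; first lra.
by rewrite !inE => /or4P[| | | /orP[]] /eqP-> /=; apply/orP;
  [right | left | right | left | right]; apply/andP; split; lra.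
Qed.

(* (1/2, -Y) and (Y, -1/2) cannot share a strip of width at most 1, and
   the three remaining points then pin both strips down. *)
Lemma example_set_cross_unique Y eps ch cv w : 2 < Y -> 0 < eps ->
  enclosing_cross (example_set Y eps) ch cv w -> w <= 1 ->
  [/\ ch = -(1/2), cv = -(1/2) & w = 1].
Proof.
move=> Y2 eps0 [w0 cover] w1.
have := cover (1/2, -Y); have := cover (Y, -(1/2)); have := cover (-(1/2), -1).
have := cover (1, 1/2); have := cover (-eps, eps); rewrite !inE !eqxx !orbT /=.
by do 5 (move=> /(_ isT) /orP[] /andP[? ?]); split; lra.
Qed.

Lemma example_set_smallest Y eps : 2 < Y -> 0 < eps < 1/2 ->
  smallest_enclosing_cross (example_set Y eps) (-(1/2)) (-(1/2)) 1.
Proof.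
move=> Y2 eps_bd; split=> [|ch cv w cross]; first exact: example_set_cross.
have [w_le1 | /ltW //] := leP w 1.
by case: (example_set_cross_unique Y2 _ cross w_le1) => [|_ _ ->]; case/andP: eps_bd.
Qed.

Lemma example_params {v Y eps} : 1 < v -> Y = (v + 3) / 2 -> eps = 1 / (4 * v) ->
  2 < Y /\ 0 < eps < 1/2.
Proof.
move=> v1 -> ->; split; first lra.
by rewrite divr_gt0 ?ltr_pdivrMr ?mulr_gt0 //; lra.
Qed.

Lemma example_set_diam v Y eps : 1 < v -> Y = (v + 3) / 2 -> eps = 1 / (4 * v) ->
  tt_diam (1/2, -(1/2)) v (example_set Y eps) <= 1 + 2 / v.
Proof.
move=> v1 YE epsE; have [Y2 /andP[e0 e1]] := example_params v1 YE epsE.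
have v0 : 0 < v by lra.
have iv0 : 0 < 1 / v by rewrite divr_gt0.
have iv1 : 1 / v < 1 by rewrite ltr_pdivrMr // mul1r.
have Yv : Y / v = 1/2 + 3/2 / v by rewrite YE; field; rewrite gt_eqF.
have eps4 : eps * 4 = 1 / v by rewrite epsE; field; rewrite gt_eqF.
have ev := divv_le v1 (ltW e0); have ev0 := divv_ge0 v1 (ltW e0).
apply: tt_diam_le => // [|p q]; first lra.
pose d := travel_time_le_l1 v1; pose V := travel_time_le_vertical v1.
pose H := travel_time_le_horizontal v1.
pose VH := travel_time_le_vertical_horizontal v1.
pose HV := travel_time_le_horizontal_vertical v1.
rewrite !inE => /or4P[| | | /orP[]] /eqP-> /or4P[| | | /orP[]] /eqP->;
  [ by_route d  | by_route VH | by_route VH | by_route V  | by_route V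
  | by_route HV | by_route d  | by_route H  | by_route HV | by_route H
  | by_route HV | by_route H  | by_route d  | by_route HV | by_route H
  | by_route V  | by_route VH | by_route VH | by_route d  | by_route V
  | by_route V  | by_route H  | by_route H  | by_route V  | by_route d ].
all: rewrite /l1 /=; elim_norms ltac:(clear -Y2 e0 e1; lra); lra.
Qed.

(* The median cross of the example is formed by the two axes.  Riding it from
   (1/2, -Y) to (Y, -1/2) costs 1 + 2Y/v = 2 + 3/v, and walking costs
   2Y - 1 = v + 2, which is no faster as v^2 >= 3. *)
Lemma example_set_median_time v Y : 1 < v -> 3 <= v * v -> Y = (v + 3) / 2 ->
  2 + 3 / v <= travel_time (median_cross (-(1/2)) (-(1/2)) 1) v (1/2, -Y) (Y, -(1/2)).
Proof.
move=> v1 v3 YE; have v0 : 0 < v by lra.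
have Y2 : 2 < Y by rewrite YE; lra.
have Yv : Y / v = 1/2 + 3/2 / v by rewrite YE; field; rewrite gt_eqF.
have iv1 : 1 / v < 1 by rewrite ltr_pdivrMr // mul1r.
have h3 : 3 / v <= v by rewrite ler_pdivrMr.
apply: le_trans (travel_time_ge_route_time v1 _ _ _).
rewrite /route_time /time_via_vertical /time_from_vertical /median_cross /l1 /=.
rewrite !addr_minr !le_min; repeat (apply/andP; split).
all: elim_norms ltac:(clear -Y2; lra); lra.
Qed.

Lemma example_set_median_diam v Y eps ch cv w :
  1 < v -> 3 <= v * v -> Y = (v + 3) / 2 -> eps = 1 / (4 * v) ->
  smallest_enclosing_cross (example_set Y eps) ch cv w ->
  (2 - 1 / (v + 2)) * delta_opt v (example_set Y eps)
    <= tt_diam (median_cross ch cv w) v (example_set Y eps).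
Proof.
move=> v1 v3 YE epsE [cross minw]; have [Y2 eps_bd] := example_params v1 YE epsE.
have w1 := minw _ _ _ (example_set_cross Y2 eps_bd).
have [-> -> ->] := example_set_cross_unique Y2 (proj1 (andP eps_bd)) cross w1.
have c0 : 0 <= 2 - 1 / (v + 2).
  by rewrite subr_ge0 ler_pdivrMr ?mul1r; lra.
have opt_le := le_trans (delta_opt_le_diam _ _ _) (example_set_diam v1 YE epsE).
apply: le_trans (ler_wpM2l c0 opt_le) _.
have -> : (2 - 1 / (v + 2)) * (1 + 2 / v) = 2 + 3 / v.
  by field; rewrite !gt_eqF //; lra.
apply: le_trans (example_set_median_time v1 v3 YE) _.
by apply: travel_time_le_diam; rewrite !inE eqxx ?orbT.
Qed.

End Highway.

Theorem lemma3 (R : realType) :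
  (forall (S : seq (R * R)) (v ch cv w : R),
      uniq S -> (3 <= size S)%N -> 1 < v ->
      smallest_enclosing_cross S ch cv w ->
      tt_diam (median_cross ch cv w) v S <= (2 + 1 / v) * delta_opt v S)
  /\
  (forall v : R, Num.sqrt 3 <= v ->
     exists S : seq (R * R),
       [/\ uniq S, (3 <= size S)%N,
           exists ch cv w, smallest_enclosing_cross S ch cv w
         & forall ch cv w, smallest_enclosing_cross S ch cv w ->
             (2 - 1 / (v + 2)) * delta_opt v S
               <= tt_diam (median_cross ch cv w) v S]).
Proof.
split=> [S v ch cv w _ _ v1 smallest | v v_ge].
  exact: median_diam_le_delta_opt.
have v3 : 3 <= v * v.
  by rewrite -[3](@sqr_sqrtr R) // expr2 ler_pM // sqrtr_ge0.
have v1 : 1 < v by have := sqrtr_ge0 (3 : R); nra.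
have [Y2 eps_bd] := example_params v1 erefl erefl.
exists (example_set ((v + 3) / 2) (1 / (4 * v))); split.
- exact: example_set_uniq.
- by [].
- by exists (-(1/2)), (-(1/2)), 1; exact: example_set_smallest.
- by move=> ch cv w; exact: example_set_median_diam.
Qed.
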